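(* Let $(\mu_0^4,\cdot,[-,-])$ be a transposed Poisson algebra structure on the associative algebra $\mu_0^4$. Then it is isomorphic to one of the following pairwise non-isomorphic algebras: $\mathbf{TP}(1,0,0)$, $\mathbf{TP}(0,\alpha,0)$ with $\alpha\in\mathbb{C}$, or $\mathbf{TP}(0,0,1)$.
   Context: $\mu_0^4$ is the complex commutative associative algebra with basis $\{e_1,\dots,e_4\}$ and $e_i\cdot e_j=e_{i+j}$ for $2\leq i+j\leq 4$, other products zero. A transposed Poisson algebra is a triple $(\mathfrak{L},\cdot,[-,-])$ with $(\mathfrak{L},\cdot)$ commutative associative, $(\mathfrak{L},[-,-])$ a Lie algebra, and $2z\cdot[x,y]=[z\cdot x,y]+[x,z\cdot y]$ for all $x,y,z$. For $\alpha_2,\alpha_3,\alpha_4\in\mathbb{C}$, $\mathbf{TP}(\alpha_2,\alpha_3,\alpha_4)$ denotes $\mu_0^4$ with the bracket $[e_i,e_j]=(j-i)\sum_{t=i+j-1}^{4}\alpha_{t-i-j+3}e_t$ for $3\leq i+j\leq 5$, all other brackets of basis elements zero. Isomorphisms preserve both operations. *)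

From HB Require Import structures.
From mathcomp Require Import all_boot all_order all_algebra.
From mathcomp Require Import complex.
From mathcomp Require Import Rstruct.
Set Implicit Arguments. Unset Strict Implicit. Unset Printing Implicit Defensive.
Import Order.TTheory GRing.Theory Num.Theory.
Local Open Scope ring_scope.

Notation CC := (complex Rdefinitions.R).

(* underlying vector space C^4; coordinate k (0-indexed) is the coefficient of e_{k+1} *)
Notation Vec := (matrix CC 1 4).

Definition e (i : 'I_4) : Vec := delta_mx 0 i.

(* the product of mu_0^4: e_a e_b = e_{a+b} if a+b <= 4, else 0 *)
Definition mu (x y : Vec) : Vec :=
  \row_(k < 4) \sum_(i < 4) \sum_(j < 4)
     (if (i.+1 + j.+1 == k.+1)%N then x 0 i * y 0 j else 0).

Definition is_TP_bracket (br : Vec -> Vec -> Vec) : Prop :=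
  [/\ (forall (a : CC) x y z, br (a *: x + y) z = a *: br x z + br y z),
      (forall (a : CC) x y z, br z (a *: x + y) = a *: br z x + br z y),
      (forall x, br x x = 0),
      (forall x y z, br x (br y z) + br y (br z x) + br z (br x y) = 0)
    & (forall x y z, 2%:R *: mu z (br x y) = br (mu z x) y + br x (mu z y))].

Definition TP_iso (br1 br2 : Vec -> Vec -> Vec) : Prop :=
  exists f : Vec -> Vec,
    [/\ (forall (a : CC) x y, f (a *: x + y) = a *: f x + f y),
        bijective f,
        (forall x y, f (mu x y) = mu (f x) (f y))
      & (forall x y, f (br1 x y) = br2 (f x) (f y))].

Definition alpha (a2 a3 a4 : CC) (n : nat) : CC :=
  if n == 2 then a2 else if n == 3 then a3 else if n == 4 then a4 else 0.

(* coefficient of e_{k+1} in [e_{i+1}, e_{j+1}] for TP(a2,a3,a4):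
   [e_I, e_J] = (J - I) sum_{t = I+J-1}^{4} alpha_{t-I-J+3} e_t  for 3 <= I+J <= 5 *)
Definition tp_coef (a2 a3 a4 : CC) (i j k : 'I_4) : CC :=
  let s : nat := (i.+1 + j.+1)%N in
  let t : nat := k.+1 in
  if [&& (3 <= s)%N, (s <= 5)%N & (s.-1 <= t)%N]
  then ((j : nat)%:R - (i : nat)%:R) * alpha a2 a3 a4 (t + 3 - s)%N
  else 0.

Definition TPbr (a2 a3 a4 : CC) (x y : Vec) : Vec :=
  \row_(k < 4) \sum_(i < 4) \sum_(j < 4) x 0 i * y 0 j * tp_coef a2 a3 a4 i j k.

(* Writing the transposed Poisson identity 2 z.[x,y] = [z.x,y] + [x,z.y] on
   basis vectors shows that a compatible bracket is determined by
   [e1, e2] = a2 e2 + a3 e3 + a4 e4, i.e. it is TP(a2, a3, a4).  Since e1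
   generates mu_0^4, an automorphism is the substitution e1 |-> u for some u
   with nonzero e1-coordinate p1, and it maps TP(a) onto TP(b) iff it maps
   [e1, e2] to [u, u^2].  Solving these equations gives a2 = b2 p1,
   a3 = b3 + 2 b2 p2 / p1 and a formula for a4: suitable u yield the normal
   forms, and the invariants "a2 = 0", "a3 when a2 = 0" and "a4 = 0 when
   a2 = a3 = 0" separate them. *)

From HB Require Import structures.
From mathcomp Require Import all_boot all_order all_algebra.
From mathcomp Require Import complex Rstruct ring.
From Stdlib Require Import FunctionalExtensionality.
Set Implicit Arguments.
Unset Strict Implicit.
Unset Printing Implicit Defensive.
Import GRing.Theory Num.Theory.
Local Open Scope ring_scope.

Definition mk4 (a b c d : CC) : Vec := \row_(k < 4) [:: a; b; c; d]`_k.

(* The paper's basis e_1, ..., e_4 (note that [e i] is e_(i+1)). *)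
Notation e1 := (mk4 1 0 0 0).
Notation e2 := (mk4 0 1 0 0).
Notation e3 := (mk4 0 0 1 0).
Notation e4 := (mk4 0 0 0 1).

Lemma mk4K (x : Vec) : x = mk4 (x 0 0) (x 0 1) (x 0 2) (x 0 3).
Proof.
apply/rowP => k; rewrite mxE.
by case: k => [[|[|[|[|k]]]] Hk] //=; congr (x _ _); exact: val_inj.
Qed.

Lemma mk4_inj a b c d a' b' c' d' :
  mk4 a b c d = mk4 a' b' c' d' -> [/\ a = a', b = b', c = c' & d = d'].
Proof.
move/rowP=> E; have := E 0; have := E 1; have := E 2; have := E 3.
by rewrite !mxE.
Qed.

Lemma mk4_0 : mk4 0 0 0 0 = 0.
Proof. by apply/rowP => k; rewrite !mxE; case: k => [[|[|[|[|k]]]] Hk]. Qed.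

Lemma add_mk4 a b c d a' b' c' d' :
  mk4 a b c d + mk4 a' b' c' d' = mk4 (a + a') (b + b') (c + c') (d + d').
Proof. by apply/rowP => k; rewrite !mxE; case: k => [[|[|[|[|k]]]] Hk]. Qed.

Lemma scale_mk4 k a b c d :
  k *: mk4 a b c d = mk4 (k * a) (k * b) (k * c) (k * d).
Proof. by apply/rowP => i; rewrite !mxE; case: i => [[|[|[|[|i]]]] Hi]. Qed.

Lemma opp_mk4 a b c d : - mk4 a b c d = mk4 (- a) (- b) (- c) (- d).
Proof. by rewrite -scaleN1r scale_mk4 !mulN1r. Qed.

Lemma mk4_decomp a b c d : mk4 a b c d = a *: e1 + b *: e2 + c *: e3 + d *: e4.
Proof. by rewrite !scale_mk4 !add_mk4; congr mk4; ring. Qed.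

Lemma mu_mk4 a b c d a' b' c' d' :
  mu (mk4 a b c d) (mk4 a' b' c' d') =
  mk4 0 (a * a') (a * b' + b * a') (a * c' + b * b' + c * a').
Proof.
apply/rowP => k; rewrite !mxE.
by case: k => [[|[|[|[|k]]]] Hk] //=;
  rewrite !big_ord_recr !big_ord0 /= ?mxE /=; ring.
Qed.

Lemma mu0r x : mu x 0 = 0.
Proof. by rewrite [x]mk4K -mk4_0 mu_mk4; congr mk4; ring. Qed.

Lemma mu_e1 a b c d : mu e1 (mk4 a b c d) = mk4 0 a b c.
Proof. by rewrite mu_mk4; congr mk4; ring. Qed.

Lemma mu_e2 a b c d : mu e2 (mk4 a b c d) = mk4 0 0 a b.
Proof. by rewrite mu_mk4; congr mk4; ring. Qed.

Lemma mu_e3 a b c d : mu e3 (mk4 a b c d) = mk4 0 0 0 a.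
Proof. by rewrite mu_mk4; congr mk4; ring. Qed.

Lemma TPbr_mk4 a2 a3 a4 x0 x1 x2 x3 y0 y1 y2 y3 :
  TPbr a2 a3 a4 (mk4 x0 x1 x2 x3) (mk4 y0 y1 y2 y3) =
  mk4 0 (a2 * (x0 * y1 - x1 * y0))
        (a3 * (x0 * y1 - x1 * y0) + 2%:R * a2 * (x0 * y2 - x2 * y0))
        (a4 * (x0 * y1 - x1 * y0) + 2%:R * a3 * (x0 * y2 - x2 * y0)
           + 3%:R * a2 * (x0 * y3 - x3 * y0) + a2 * (x1 * y2 - x2 * y1)).
Proof.
apply/rowP => k; rewrite !mxE.
by case: k => [[|[|[|[|k]]]] Hk] //=;
  rewrite !big_ord_recr !big_ord0 /= ?mxE /tp_coef /alpha /=; ring.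
Qed.

Lemma scale2_eq0 (x : Vec) : 2%:R *: x = 0 -> x = 0.
Proof. by move/eqP; rewrite scaler_eq0 pnatr_eq0 /= => /eqP. Qed.

Section LinearMap.
Variables (R : pzRingType) (U V : lmodType R) (g : U -> V).
Hypothesis g_lin : forall a x y, g (a *: x + y) = a *: g x + g y.

Lemma lin0 : g 0 = 0.
Proof. by have := g_lin (-1) 0 0; rewrite scaler0 addr0 scaleN1r addNr. Qed.

Lemma linD x y : g (x + y) = g x + g y.
Proof. by have := g_lin 1 x y; rewrite !scale1r. Qed.

Lemma linZ a x : g (a *: x) = a *: g x.
Proof. by have := g_lin a x 0; rewrite !addr0 lin0 addr0. Qed.

End LinearMap.

Section TransposedPoissonBracket.
Variable br : Vec -> Vec -> Vec.
Hypothesis br_TP : is_TP_bracket br.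

Lemma br_linl z a x y : br (a *: x + y) z = a *: br x z + br y z.
Proof. by case: br_TP. Qed.

Lemma br_linr z a x y : br z (a *: x + y) = a *: br z x + br z y.
Proof. by case: br_TP. Qed.

Lemma brDl x y z : br (x + y) z = br x z + br y z.
Proof. exact: (linD (br_linl z)). Qed.

Lemma brDr x y z : br z (x + y) = br z x + br z y.
Proof. exact: (linD (br_linr z)). Qed.

Lemma brZl a x z : br (a *: x) z = a *: br x z.
Proof. exact: (linZ (br_linl z)). Qed.

Lemma brZr a x z : br z (a *: x) = a *: br z x.
Proof. exact: (linZ (br_linr z)). Qed.

Lemma br0r z : br z 0 = 0.
Proof. exact: (lin0 (br_linr z)). Qed.

Lemma brxx x : br x x = 0.
Proof. by case: br_TP. Qed.

Lemma brC x y : br y x = - br x y.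
Proof.
apply/eqP; rewrite -addr_eq0 addrC.
by have := brxx (x + y); rewrite brDl !brDr !brxx add0r addr0 => ->.
Qed.

Lemma brTP x y z : 2%:R *: mu z (br x y) = br (mu z x) y + br x (mu z y).
Proof. by case: br_TP. Qed.

Lemma mu_e1_eq0 x : mu e1 x = 0 -> x = mk4 0 0 0 (x 0 3).
Proof.
rewrite [x in mu _ x]mk4K mu_e1 -mk4_0 => /mk4_inj [_ x0 x1 x2].
by rewrite [LHS]mk4K x0 x1 x2.
Qed.

Lemma br_e1e3 : br e1 e3 = 2%:R *: mu e1 (br e1 e2).
Proof. by rewrite brTP !mu_e1 brxx add0r. Qed.

Lemma br_e1e2_shape : exists q1 q2 q3, br e1 e2 = mk4 0 q1 q2 q3.
Proof.
have e2_e1e3 : mu e2 (br e1 e3) = 0.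
  by apply: scale2_eq0; rewrite brTP mu_e2 mu_e2 mk4_0 brxx br0r addr0.
move: e2_e1e3; rewrite br_e1e3 [br e1 e2]mk4K mu_e1 scale_mk4 mu_e2 -mk4_0.
case/mk4_inj=> _ _ _ /eqP; rewrite mulf_eq0 pnatr_eq0 /= => /eqP ->.
by do 3 eexists.
Qed.

Lemma br_basis : exists q1 q2 q3,
  [/\ br e1 e2 = mk4 0 q1 q2 q3, br e1 e3 = mk4 0 0 (2%:R * q1) (2%:R * q2),
      br e1 e4 = mk4 0 0 0 (3%:R * q1), br e2 e3 = mk4 0 0 0 q1
    & br e2 e4 = 0 /\ br e3 e4 = 0].
Proof.
have [q1 [q2 [q3 e1e2]]] := br_e1e2_shape.
have e1e3 : br e1 e3 = mk4 0 0 (2%:R * q1) (2%:R * q2).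
  by rewrite br_e1e3 e1e2 mu_e1 scale_mk4 mulr0.
have e2e4 : br e2 e4 = 0.
  have := brTP e1 e2 e3; rewrite e1e2 !mu_e3 mk4_0 scaler0 br0r addr0.
  by rewrite brC => /esym /eqP; rewrite oppr_eq0 => /eqP.
have e3e4 : br e3 e4 = 0.
  by have := brTP e2 e4 e1; rewrite e2e4 mu0r scaler0 !mu_e1 mk4_0 br0r addr0.
have [s e1e4] : exists s, br e1 e4 = mk4 0 0 0 s.
  exists (br e1 e4 0 3); apply: mu_e1_eq0; apply: scale2_eq0.
  by rewrite brTP !mu_e1 mk4_0 e2e4 br0r addr0.
have [t e2e3] : exists t, br e2 e3 = mk4 0 0 0 t.
  exists (br e2 e3 0 3); apply: mu_e1_eq0; apply: scale2_eq0.
  by rewrite brTP !mu_e1 brxx e2e4 add0r.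
have st_sum : s + t = 4%:R * q1.
  have := brTP e1 e3 e1; rewrite !mu_e1 e1e3 e2e3 e1e4 mu_e1 scale_mk4 add_mk4.
  by case/mk4_inj => _ _ _ sum; rewrite addrC -sum; ring.
have st_diff : s - t = 2%:R * q1.
  have := brTP e1 e2 e2; rewrite !mu_e2 (brC e2 e3) e1e2 e2e3 e1e4 mu_e2.
  rewrite opp_mk4 scale_mk4 add_mk4.
  by case/mk4_inj => _ _ _ diff; rewrite addrC -diff.
have two_neq0 : (2%:R : CC) != 0 by rewrite pnatr_eq0.
have t_eq : t = q1.
  apply: (mulfI two_neq0); have -> : 2%:R * t = (s + t) - (s - t) by ring.
  by rewrite st_sum st_diff; ring.
have s_eq : s = 3%:R * q1.
  by rewrite -(subrK t s) st_diff t_eq; ring.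
by exists q1, q2, q3; rewrite e1e4 e2e3 s_eq t_eq.
Qed.

Lemma br_eq_TPbr : exists q1 q2 q3, br = TPbr q1 q2 q3.
Proof.
have [q1 [q2 [q3 [e1e2 e1e3 e1e4 e2e3 [e2e4 e3e4]]]]] := br_basis.
exists q1, q2, q3; apply: functional_extensionality => x.
apply: functional_extensionality => y.
rewrite [x]mk4K [y]mk4K TPbr_mk4 (mk4_decomp (x 0 0)) (mk4_decomp (y 0 0)).
rewrite !(brDl, brDr, brZl, brZr) !brxx (brC e1 e2) (brC e1 e3) (brC e1 e4).
rewrite (brC e2 e3) (brC e2 e4) (brC e3 e4) e1e2 e1e3 e1e4 e2e3 e2e4 e3e4.
by rewrite -!mk4_0 !(opp_mk4, scale_mk4, add_mk4); congr mk4; ring.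
Qed.

End TransposedPoissonBracket.

Definition subst_gen (u x : Vec) : Vec :=
  x 0 0 *: u + x 0 1 *: mu u u + x 0 2 *: mu u (mu u u)
  + x 0 3 *: mu (mu u u) (mu u u).

Lemma subst_gen_mk4 p1 p2 p3 p4 a b c d :
  subst_gen (mk4 p1 p2 p3 p4) (mk4 a b c d) =
  mk4 (a * p1) (a * p2 + b * p1 ^+ 2)
      (a * p3 + 2%:R * b * p1 * p2 + c * p1 ^+ 3)
      (a * p4 + b * (2%:R * p1 * p3 + p2 ^+ 2) + 3%:R * c * p1 ^+ 2 * p2
       + d * p1 ^+ 4).
Proof.
by rewrite /subst_gen !mxE /= !mu_mk4 !(scale_mk4, add_mk4); congr mk4; ring.
Qed.

Lemma subst_gen_lin u a x y :
  subst_gen u (a *: x + y) = a *: subst_gen u x + subst_gen u y.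
Proof.
rewrite [u]mk4K [x]mk4K [y]mk4K scale_mk4 add_mk4 !subst_gen_mk4.
by rewrite scale_mk4 add_mk4; congr mk4; ring.
Qed.

Lemma subst_gen_mu u x y :
  subst_gen u (mu x y) = mu (subst_gen u x) (subst_gen u y).
Proof.
rewrite [u]mk4K [x]mk4K [y]mk4K mu_mk4 !subst_gen_mk4 mu_mk4.
by congr mk4; ring.
Qed.

(* The compositional inverse of the series p1 t + p2 t^2 + p3 t^3 + p4 t^4. *)
Definition series_inv (p1 p2 p3 p4 : CC) : Vec :=
  mk4 p1^-1 (- p2 / p1 ^+ 3) ((2%:R * p2 ^+ 2 - p1 * p3) / p1 ^+ 5)
      ((5%:R * p1 * p2 * p3 - 5%:R * p2 ^+ 3 - p1 ^+ 2 * p4) / p1 ^+ 7).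

Lemma subst_gen_bij p1 p2 p3 p4 :
  p1 != 0 -> bijective (subst_gen (mk4 p1 p2 p3 p4)).
Proof.
move=> p1_neq0; exists (subst_gen (series_inv p1 p2 p3 p4)) => x.
  by rewrite [x]mk4K !subst_gen_mk4; congr mk4; field.
by rewrite [x]mk4K !subst_gen_mk4; congr mk4; field.
Qed.

Lemma eq_of_sub_eq (R : zmodType) (x y x' y' : R) :
  x' = y' -> x - y = x' - y' -> x = y.
Proof. by move=> -> /eqP; rewrite subrr subr_eq0 => /eqP. Qed.

(* With u = (p1, p2, p3, _) the image of e1 under an automorphism f, the three
   equations are the coordinates of f [e1, e2] = [u, u^2], the brackets being
   those of TP(a2, a3, a4) and TP(b2, b3, b4). *)
Definition iso_params (a2 a3 a4 b2 b3 b4 p1 p2 p3 : CC) : Prop :=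
  [/\ p1 != 0,
      a2 * p1 ^+ 2 = b2 * p1 ^+ 3,
      2%:R * a2 * p1 * p2 + a3 * p1 ^+ 3
      = 4%:R * b2 * p1 ^+ 2 * p2 + b3 * p1 ^+ 3
    & a2 * (2%:R * p1 * p3 + p2 ^+ 2) + 3%:R * a3 * p1 ^+ 2 * p2 + a4 * p1 ^+ 4
      = 5%:R * b2 * p1 ^+ 2 * p3 + 5%:R * b2 * p1 * p2 ^+ 2
        + 4%:R * b3 * p1 ^+ 2 * p2 + b4 * p1 ^+ 3].

Lemma iso_params_solved a2 a3 a4 b2 b3 b4 p1 p2 p3 :
  iso_params a2 a3 a4 b2 b3 b4 p1 p2 p3 ->
  [/\ a2 = b2 * p1, a3 = b3 + 2%:R * b2 * p2 / p1
    & a4 = (b4 * p1 ^+ 2 + b3 * p1 * p2 + 3%:R * b2 * p1 * p3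
            - 2%:R * b2 * p2 ^+ 2) / p1 ^+ 3].
Proof.
case=> p1_neq0 c2 c3 c4.
have a2E : a2 = b2 * p1.
  by apply: (mulIf (expf_neq0 2 p1_neq0)); rewrite c2; ring.
subst a2; have a3E : a3 = b3 + 2%:R * b2 * p2 / p1.
  by apply: (mulIf (expf_neq0 3 p1_neq0)); apply: (eq_of_sub_eq c3); field.
subst a3; split => //.
by apply: (mulIf (expf_neq0 4 p1_neq0)); apply: (eq_of_sub_eq c4); field.
Qed.

Lemma subst_gen_TPbr a2 a3 a4 b2 b3 b4 p1 p2 p3 x y :
  iso_params a2 a3 a4 b2 b3 b4 p1 p2 p3 ->
  subst_gen (mk4 p1 p2 p3 0) (TPbr a2 a3 a4 x y)
  = TPbr b2 b3 b4 (subst_gen (mk4 p1 p2 p3 0) x) (subst_gen (mk4 p1 p2 p3 0) y).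
Proof.
move=> params; have [p1_neq0 _ _ _] := params.
case: (iso_params_solved params) => -> -> ->.
by rewrite [x]mk4K [y]mk4K TPbr_mk4 !subst_gen_mk4 TPbr_mk4; congr mk4; field.
Qed.

Lemma TP_iso_params a2 a3 a4 b2 b3 b4 :
  TP_iso (TPbr a2 a3 a4) (TPbr b2 b3 b4) ->
  exists p1 p2 p3, iso_params a2 a3 a4 b2 b3 b4 p1 p2 p3.
Proof.
case=> f [f_lin [g fK _] f_mu f_br].
have [p1 [p2 [p3 [p4 f_e1]]]] : exists p1 p2 p3 p4, f e1 = mk4 p1 p2 p3 p4.
  by do 4 eexists; exact: mk4K.
have f_e2 : f e2 = mu (f e1) (f e1) by rewrite -f_mu mu_e1.
have f_e3 : f e3 = mu (f e1) (mu (f e1) (f e1)) by rewrite -!f_mu !mu_e1.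
have f_e4 : f e4 = mu (mu (f e1) (f e1)) (mu (f e1) (f e1)).
  by rewrite -!f_mu !mu_e1 mu_e2.
rewrite f_e1 !mu_mk4 in f_e2 f_e3 f_e4.
have f_e4_neq0 : f e4 != 0.
  apply/eqP; rewrite -(lin0 f_lin) => /(can_inj fK); rewrite -mk4_0.
  by case/mk4_inj => _ _ _ /eqP; rewrite oner_eq0.
have TP_e1e2 : TPbr a2 a3 a4 e1 e2 = a2 *: e2 + a3 *: e3 + a4 *: e4.
  by rewrite TPbr_mk4 !scale_mk4 !add_mk4; congr mk4; ring.
exists p1, p2, p3; split.
- move: f_e4_neq0; apply: contra_neq => p1_eq0.
  by rewrite f_e4 p1_eq0 !(mul0r, mulr0, addr0) mk4_0.
all: move: (f_br e1 e2); rewrite TP_e1e2 !(linD f_lin) !(linZ f_lin).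
all: rewrite f_e1 f_e2 f_e3 f_e4 TPbr_mk4 !(scale_mk4, add_mk4).
all: case/mk4_inj => _ c2 c3 c4.
- by apply: (eq_of_sub_eq c2); ring.
- by apply: (eq_of_sub_eq c3); ring.
- by apply: (eq_of_sub_eq c4); ring.
Qed.

Lemma TP_isoP a2 a3 a4 b2 b3 b4 :
  TP_iso (TPbr a2 a3 a4) (TPbr b2 b3 b4) <->
  exists p1 p2 p3, iso_params a2 a3 a4 b2 b3 b4 p1 p2 p3.
Proof.
split; first exact: TP_iso_params.
case=> p1 [p2 [p3 params]]; exists (subst_gen (mk4 p1 p2 p3 0)); split.
- exact: subst_gen_lin.
- by apply: subst_gen_bij; case: params.
- exact: subst_gen_mu.
- by move=> x y; exact: subst_gen_TPbr.
Qed.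

Lemma TP_iso_alpha2_eq0 a2 a3 a4 b2 b3 b4 :
  TP_iso (TPbr a2 a3 a4) (TPbr b2 b3 b4) -> (a2 == 0) = (b2 == 0).
Proof.
case/TP_isoP=> p1 [p2 [p3 params]]; have [p1_neq0 _ _ _] := params.
case: (iso_params_solved params) => -> _ _.
by rewrite mulf_eq0 (negbTE p1_neq0) orbF.
Qed.

Lemma TP_iso_alpha3 a3 a4 b3 b4 :
  TP_iso (TPbr 0 a3 a4) (TPbr 0 b3 b4) -> a3 = b3.
Proof.
case/TP_isoP=> p1 [p2 [p3 /iso_params_solved [_ -> _]]].
by rewrite mulr0 !mul0r addr0.
Qed.

Lemma TP_iso_alpha4_eq0 a4 b4 :
  TP_iso (TPbr 0 0 a4) (TPbr 0 0 b4) -> (a4 == 0) = (b4 == 0).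
Proof.
case/TP_isoP=> p1 [p2 [p3 params]]; have [p1_neq0 _ _ _] := params.
case: (iso_params_solved params) => _ _ ->.
rewrite !(mulr0, mul0r, addr0, subr0) !mulf_eq0 invr_eq0 !expf_eq0.
by rewrite (negbTE p1_neq0) /= !orbF.
Qed.

Lemma TPbr_normal_form q1 q2 q3 :
     TP_iso (TPbr q1 q2 q3) (TPbr 1 0 0)
  \/ (exists a, TP_iso (TPbr q1 q2 q3) (TPbr 0 a 0))
  \/ TP_iso (TPbr q1 q2 q3) (TPbr 0 0 1).
Proof.
have [q1_eq0 | q1_neq0] := eqVneq q1 0; last first.
  left; apply/TP_isoP; exists q1, (q1 * q2 / 2%:R).
  exists (q1 ^+ 2 * q3 / 3%:R + q1 * q2 ^+ 2 / 6%:R).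
  by split=> //; field.
subst q1; have [q2_eq0 | q2_neq0] := eqVneq q2 0; last first.
  right; left; exists q2; apply/TP_isoP; exists 1, (q3 / q2), 0.
  by split; rewrite ?oner_neq0 //; field.
subst q2; have [q3_eq0 | q3_neq0] := eqVneq q3 0.
  subst q3; right; left; exists 0; apply/TP_isoP; exists 1, 0, 0.
  by split; rewrite ?oner_neq0 //; ring.
right; right; apply/TP_isoP; exists q3^-1, 0, 0.
by split; rewrite ?invr_eq0 //; field.
Qed.

Theorem mainTheorem4 :
  (forall br : Vec -> Vec -> Vec, is_TP_bracket br ->
      TP_iso br (TPbr 1 0 0)
   \/ (exists a : CC, TP_iso br (TPbr 0 a 0))
   \/ TP_iso br (TPbr 0 0 1))
  /\ ~ TP_iso (TPbr 1 0 0) (TPbr 0 0 1)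
  /\ (forall a : CC, ~ TP_iso (TPbr 1 0 0) (TPbr 0 a 0))
  /\ (forall a : CC, ~ TP_iso (TPbr 0 0 1) (TPbr 0 a 0))
  /\ (forall a b : CC, TP_iso (TPbr 0 a 0) (TPbr 0 b 0) -> a = b).
Proof.
split.
  by move=> br /br_eq_TPbr [q1 [q2 [q3 ->]]]; exact: TPbr_normal_form.
split; first by move/TP_iso_alpha2_eq0; rewrite oner_eq0 eqxx.
split; first by move=> a /TP_iso_alpha2_eq0; rewrite oner_eq0 eqxx.
split; last by move=> a b /TP_iso_alpha3.
move=> a iso; have a_eq0 := TP_iso_alpha3 iso; subst a.
by move/TP_iso_alpha4_eq0: iso; rewrite oner_eq0 eqxx.
Qed.
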